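(* Let $\Sigma$ be a finite alphabet, $m\ge 1$, $S\in\Sigma^m$, and let $f:\Sigma^m\to\mathbb{N}$ and $g:\Sigma^m\to\{1,\dots,m\}$ be the cost and shift functions of a window-based pattern matching algorithm $\mathcal{A}$ for pattern $S$. Let $\mathcal{D}$ be the DAA encoding $\mathcal{A}$ (defined in the context), and let $\mathcal{D}'$ be the DAA obtained from the general construction scheme (defined in the context) using a set of window representatives $\mathcal{R}$ of length $m$ that is compatible with $\mathcal{A}$ and $S$, together with an associated transition function $\delta_\mathcal{R}$. Then for every $n\ge 0$ and every text $T\in\Sigma^n$, the value computed by $\mathcal{D}$ on $T$ equals the value computed by $\mathcal{D}'$ on $T$.
   Context: A deterministic arithmetic automaton (DAA) consists of a finite state set $\mathcal{Q}$, a start state $q_0$, a transition function $\delta:\mathcal{Q}\times\Sigma\to\mathcal{Q}$, a start value $v_0=0\in\mathbb{N}$, and for each state $q$ an emission $\eta_q\in\mathbb{N}$; the value update is addition. Reading a character $\sigma$ in state $q$ with value $v$ moves to state $q'=\delta(q,\sigma)$ with value $v+\eta_{q'}$. Starting from $(q_0,0)$ and reading $T$ character by character, the value reached after reading all of $T$ is the value computed by the DAA on $T$. DAA encoding $\mathcal{A}$: states $\Sigma^m\times\{0,\dots,m\}$, start state $(S,m)$; $\delta((w,k),\sigma)=(w_1\cdots w_{m-1}\sigma,\,k-1)$ if $k>0$, and $=(w_1\cdots w_{m-1}\sigma,\,g(w)-1)$ if $k=0$ (where $w=w_0\cdots w_{m-1}$); emission $\eta_{(w,k)}=0$ if $k>0$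 and $\eta_{(w,k)}=f(w)$ if $k=0$. Representatives: for a finite set $\mathcal{R}\subset\Sigma^*$ and $a\in\Sigma^m$, $\mathrm{rep}_\mathcal{R}(a)$ is the longest suffix of $a$ (suffixes include the empty string $\varepsilon$ and $a$ itself) that lies in $\mathcal{R}$. $\mathcal{R}$ is a set of window representatives of length $m$ if (1) every $a\in\Sigma^m$ has a suffix in $\mathcal{R}$, and (2) there is $\delta_\mathcal{R}:\mathcal{R}\times\Sigma\to\mathcal{R}$ with $\delta_\mathcal{R}(\mathrm{rep}_\mathcal{R}(a),\sigma)=\mathrm{rep}_\mathcal{R}(a_1\cdots a_{m-1}\sigma)$ for all $a\in\Sigma^m,\sigma\in\Sigma$. It is compatible with $\mathcal{A}$ and $S$ if $f(a)=f(a')$ and $g(a)=g(a')$ whenever $\mathrm{rep}_\mathcal{R}(a)=\mathrm{rep}_\mathcal{R}(a')$; then for $r$ in the image of $\mathrm{rep}_\mathcal{R}$ set $f(r)=f(a)$, $g(r)=g(a)$ for any $a$ with $\mathrm{rep}_\mathcal{R}(a)=r$. General construction scheme: states $\mathcal{R}\times\{0,\dots,m\}$, start state $(\mathrm{rep}_\mathcal{R}(S),m)$; $\delta((r,k),\sigma)=(\delta_\mathcal{R}(r,\sigma),k-1)$ if $k>0$ and $=(\delta_\mathcal{R}(r,\sigma),g(r)-1)$ if $k=0$; emission $\eta_{(r,k)}=0$ if $k>0$ and $\eta_{(r,k)}=f(r)$ if $k=0$. *)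

From mathcomp Require Import all_boot all_order.
Set Implicit Arguments. Unset Strict Implicit. Unset Printing Implicit Defensive.

(* Deterministic arithmetic automaton with additive value update, start value 0. *)
Record daa (Sigma : Type) := DAA {
  dstate : finType;
  dstart : dstate;
  ddelta : dstate -> Sigma -> dstate;
  deta   : dstate -> nat }.

Definition daa_value (Sigma : Type) (D : daa Sigma) (T : seq Sigma) : nat :=
  (foldl (fun p s => let q := @ddelta Sigma D p.1 s in (q, p.2 + @deta Sigma D q))
         (@dstart Sigma D, 0) T).2.

Section Windows.
Variables (Sigma : finType) (m : nat).

Definition wshift (w : m.-tuple Sigma) (s : Sigma) : m.-tuple Sigma :=
  [tuple nth s (rcons (behead w) s) i | i < m].

Definition encDAA (f g : m.-tuple Sigma -> nat) (S : m.-tuple Sigma) : daa Sigma :=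
  @DAA Sigma (prod (m.-tuple Sigma) (ordinal m.+1))
    (S, ord_max)
    (fun q s => let: (w, k) := q in
                if 0 < (k : nat) then (wshift w s, inord (k.-1))
                else (wshift w s, inord ((g w).-1)))
    (fun q => let: (w, k) := q in if 0 < (k : nat) then 0 else f w).

End Windows.

(* rep_R(a): the longest suffix of a (among drop j a, j <= size a) lying in R
   (epsilon if none). *)
Definition rep (Sigma : finType) (R : seq (seq Sigma)) (a : seq Sigma) : seq Sigma :=
  drop (size a - \max_(i < (size a).+1 | drop (size a - i) a \in R) i) a.

Definition is_suffix (Sigma : eqType) (s a : seq Sigma) : Prop :=
  exists j, s = drop j a.

Definition genDAA (Sigma : finType) (m : nat) (R : seq (seq Sigma))
    (deltaR : seq_sub R -> Sigma -> seq_sub R) (fR gR : seq_sub R -> nat)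
    (r0 : seq_sub R) : daa Sigma :=
  @DAA Sigma (prod (seq_sub R) (ordinal m.+1))
    (r0, ord_max)
    (fun q s => let: (r, k) := q in
                if 0 < (k : nat) then (deltaR r s, inord (k.-1))
                else (deltaR r s, inord ((gR r).-1)))
    (fun q => let: (r, k) := q in if 0 < (k : nat) then 0 else fR r).

From mathcomp Require Import all_boot.

Set Implicit Arguments.
Unset Strict Implicit.
Unset Printing Implicit Defensive.

(** The encoding and the construction scheme run in lockstep: the window [w]
    of the first automaton and the representative [r] of the second always
    satisfy [r = rep_R w], and their shift counters agree.  Since [deltaR]
    tracks [rep_R] along window shifts and [f], [g] factor through [rep_R],
    both automata emit the same value at every step. *)

Section Simulation.
Variables (Sigma : Type) (D1 D2 : daa Sigma).
Variable sim : dstate D1 -> dstate D2 -> Prop.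
Hypothesis sim_delta : forall q1 q2 s,
  sim q1 q2 -> sim (ddelta q1 s) (ddelta q2 s).
Hypothesis sim_eta : forall q1 q2, sim q1 q2 -> deta q1 = deta q2.

Lemma foldl_daa_sim (T : seq Sigma) q1 q2 v : sim q1 q2 ->
  (foldl (fun p s => let q := ddelta p.1 s in (q, p.2 + deta q)) (q1, v) T).2 =
  (foldl (fun p s => let q := ddelta p.1 s in (q, p.2 + deta q)) (q2, v) T).2.
Proof.
elim: T q1 q2 v => [|s T IH] q1 q2 v sim12 //=.
rewrite (sim_eta (sim_delta s sim12)).
exact/IH/sim_delta.
Qed.

Lemma daa_value_sim (T : seq Sigma) :
  sim (dstart D1) (dstart D2) -> daa_value D1 T = daa_value D2 T.
Proof. exact: foldl_daa_sim. Qed.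

End Simulation.

Section Representatives.
Variables (Sigma : finType) (m : nat) (R : seq (seq Sigma)).
Variables (f g : m.-tuple Sigma -> nat) (S : m.-tuple Sigma).
Variables (deltaR : seq_sub R -> Sigma -> seq_sub R) (fR gR : seq_sub R -> nat).
Variable r0 : seq_sub R.
Hypothesis deltaR_rep : forall (a : m.-tuple Sigma) (r : seq_sub R) (s : Sigma),
  val r = rep R (val a) -> val (deltaR r s) = rep R (val (wshift a s)).
Hypothesis fR_rep : forall (r : seq_sub R) (a : m.-tuple Sigma),
  val r = rep R (val a) -> fR r = f a.
Hypothesis gR_rep : forall (r : seq_sub R) (a : m.-tuple Sigma),
  val r = rep R (val a) -> gR r = g a.

Definition rep_state (q1 : dstate (encDAA f g S))
    (q2 : dstate (genDAA m deltaR fR gR r0)) : Prop :=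
  q1.2 = q2.2 /\ val q2.1 = rep R (val q1.1).

Lemma rep_state_delta q1 q2 s : rep_state q1 q2 ->
  rep_state (ddelta q1 s) (ddelta q2 s).
Proof.
case: q1 q2 => [w k] [r _] [/= <- wr]; rewrite /rep_state /=.
by case: ifP => _ /=; rewrite (deltaR_rep s wr) // (gR_rep wr).
Qed.

Lemma rep_state_eta q1 q2 : rep_state q1 q2 -> deta q1 = deta q2.
Proof. by case: q1 q2 => [w k] [r _] [/= <- /fR_rep ->]. Qed.

End Representatives.

Theorem theorem15 (Sigma : finType) (m : nat) (Hm : 1 <= m)
  (S : m.-tuple Sigma) (f g : m.-tuple Sigma -> nat)
  (Hg : forall w, 1 <= g w <= m)
  (R : seq (seq Sigma))
  (* (1) every window has a suffix in R *)
  (HR1 : forall a : m.-tuple Sigma, exists2 s, s \in R & is_suffix s (val a))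
  (* (2) deltaR is a transition function on representatives *)
  (deltaR : seq_sub R -> Sigma -> seq_sub R)
  (HR2 : forall (a : m.-tuple Sigma) (r : seq_sub R) (s : Sigma),
      val r = rep R (val a) -> val (deltaR r s) = rep R (val (wshift a s)))
  (* compatibility with the algorithm *)
  (Hcomp : forall a a' : m.-tuple Sigma, rep R (val a) = rep R (val a') ->
      f a = f a' /\ g a = g a')
  (* f, g on representatives *)
  (fR gR : seq_sub R -> nat)
  (HfR : forall (r : seq_sub R) (a : m.-tuple Sigma),
      val r = rep R (val a) -> fR r = f a)
  (HgR : forall (r : seq_sub R) (a : m.-tuple Sigma),
      val r = rep R (val a) -> gR r = g a)
  (* start representative rep_R(S) *)
  (r0 : seq_sub R) (Hr0 : val r0 = rep R (val S)) :
  forall (n : nat) (T : seq Sigma), size T = n ->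
    daa_value (encDAA f g S) T = daa_value (@genDAA Sigma m R deltaR fR gR r0) T.
Proof.
move=> n T _.
apply: (daa_value_sim (rep_state_delta HR2 HgR) (rep_state_eta HfR)).
by split.
Qed.
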